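(* Let $n$ be a positive integer, let $\mathbf{A}$ be an infinite $n$-generated subdirectly irreducible bi-Heyting algebra validating $LFC$, and let $\mathfrak{X}=\mathbf{A}_*$. Let $m$ be a minimal element of $\mathfrak{X}$ with $X=\{x:m<x\}\uplus min(\mathfrak{X})$ and such that every minimal $y\ne m$ has a unique immediate successor lying strictly above $m$. Let $y\le x$ be points with $m\le y$ such that the interval $[y,x]=\{u: y\le u\le x\}$ has more than $2^n$ elements. Then there exists $y'$ with $y<y'\le x$ such that $y'$ has an immediate predecessor $w$ with $w\not>m$. Consequently, the set $(\downarrow x\setminus\downarrow y)\cap min(\mathfrak{X})$ is nonempty.
   Context: Bi-Heyting algebras are bounded distributive lattices with residuated $\to$ and $\leftarrow$. $\mathbf{A}_*$ is the bi-Esakia dual of $\mathbf{A}$: prime filters ordered by inclusion with the Priestley topology. For SI $\mathbf{A}$ validating $\mathsf{bi\text{-}LC}$ (bi-intuitionistic logic plus $(p\to q)\vee(q\to p)$), $\mathbf{A}_*$ is a bi-Esakia co-tree: it has a top and principal upsets are chains. $LFC=\mathsf{bi\text{-}LC}+\beta(\mathfrak{F}_0)+\mathcal{J}(\mathfrak{F}_1)+\mathcal{J}(\mathfrak{F}_2)+\mathcal{J}(\mathfrak{F}_3)$. For a finite co-tree $\mathfrak{Y}$: - $\mathfrak{X}\not\models\beta(\mathfrak{Y})$ iff $\mathfrak{Y}$ order-embeds into $\mathfrak{X}$; - $\mathfrak{X}\not\models\mathcal{J}(\mathfrak{Y})$ iff there is a continuous surjective bi-p-morphism onto $\mathfrak{Y}$.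 The co-trees are: - $\mathfrak{F}_0$: $d<b<a$, $e<c<a$; - $\mathfrak{F}_1$: the chain $c<b<a$; - $\mathfrak{F}_2$: the chain $d<c<b<a$ plus $a'<a$, with $a'$ incomparable to $b,c,d$; - $\mathfrak{F}_3$: a top over three incomparable minimal points. $\downarrow x=\{u: u\le x\}$. *)

From Stdlib Require Import List Arith.
Import ListNotations.

Record biHA := BiHA {
  car :> Type;
  bjoin : car -> car -> car;
  bmeet : car -> car -> car;
  bimp  : car -> car -> car;
  bcoimp : car -> car -> car;
  bbot : car;
  btop : car;
  joinC : forall a b, bjoin a b = bjoin b a;
  meetC : forall a b, bmeet a b = bmeet b a;
  joinA : forall a b c, bjoin a (bjoin b c) = bjoin (bjoin a b) c;
  meetA : forall a b c, bmeet a (bmeet b c) = bmeet (bmeet a b) c;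
  joinKmeet : forall a b, bjoin a (bmeet a b) = a;
  meetKjoin : forall a b, bmeet a (bjoin a b) = a;
  meet_joinDr : forall a b c, bmeet a (bjoin b c) = bjoin (bmeet a b) (bmeet a c);
  join_bot : forall a, bjoin a bbot = a;
  meet_top : forall a, bmeet a btop = a;
  (* residuation of -> :  c /\ a <= b  iff  c <= a -> b  (x <= y := x /\ y = x) *)
  imp_res : forall a b c, bmeet (bmeet c a) b = bmeet c a <-> bmeet c (bimp a b) = c;
  (* residuation of <- :  a <- b <= c  iff  a <= b \/ c *)
  coimp_res : forall a b c, bmeet (bcoimp a b) c = bcoimp a b <-> bmeet a (bjoin b c) = a
}.

Arguments bjoin {_}. Arguments bmeet {_}. Arguments bimp {_}. Arguments bcoimp {_}.
Arguments bbot {_}. Arguments btop {_}.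

Definition ble {A : biHA} (a b : A) : Prop := bmeet a b = a.

Definition congruence (A : biHA) (R : A -> A -> Prop) : Prop :=
  (forall a, R a a) /\ (forall a b, R a b -> R b a) /\
  (forall a b c, R a b -> R b c -> R a c) /\
  (forall a b c d, R a b -> R c d ->
     R (bjoin a c) (bjoin b d) /\ R (bmeet a c) (bmeet b d) /\
     R (bimp a c) (bimp b d) /\ R (bcoimp a c) (bcoimp b d)).

Definition nontrivial_rel (A : biHA) (R : A -> A -> Prop) : Prop :=
  exists a b, R a b /\ a <> b.

Definition subdirectly_irreducible (A : biHA) : Prop :=
  exists theta, congruence A theta /\ nontrivial_rel A theta /\
    forall psi, congruence A psi -> nontrivial_rel A psi ->
      forall a b, theta a b -> psi a b.

Definition closed_sub (A : biHA) (S : A -> Prop) : Prop :=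
  S bbot /\ S btop /\
  (forall a b, S a -> S b ->
     S (bjoin a b) /\ S (bmeet a b) /\ S (bimp a b) /\ S (bcoimp a b)).

Definition n_generated (A : biHA) (n : nat) : Prop :=
  exists g : nat -> A,
    forall S : A -> Prop, closed_sub A S -> (forall i, i < n -> S (g i)) ->
      forall a, S a.

Definition infinite_alg (A : biHA) : Prop :=
  forall l : list A, exists a : A, ~ In a l.

Definition prime_filter (A : biHA) (F : A -> Prop) : Prop :=
  F btop /\ ~ F bbot /\
  (forall a b, F a -> ble a b -> F b) /\
  (forall a b, F a -> F b -> F (bmeet a b)) /\
  (forall a b, F (bjoin a b) -> F a \/ F b).

Definition pt (A : biHA) : Type := { F : A -> Prop | prime_filter A F }.

Definition ple {A : biHA} (x y : pt A) : Prop :=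
  forall a, proj1_sig x a -> proj1_sig y a.
Definition plt {A : biHA} (x y : pt A) : Prop := ple x y /\ ~ ple y x.
Definition peq {A : biHA} (x y : pt A) : Prop := ple x y /\ ple y x.

(* Priestley topology: generated by the sets phi(a) = {x | a \in x}
   and their complements. *)
Definition popen {A : biHA} (U : pt A -> Prop) : Prop :=
  forall x, U x -> exists (la lb : list A),
    (forall a, In a la -> proj1_sig x a) /\
    (forall b, In b lb -> ~ proj1_sig x b) /\
    (forall z : pt A, (forall a, In a la -> proj1_sig z a) ->
                      (forall b, In b lb -> ~ proj1_sig z b) -> U z).

Definition minimal {A : biHA} (x : pt A) : Prop :=
  forall z, ple z x -> ple x z.

(* z is an immediate successor of y (equivalently y an immediate predecessor of z) *)
Definition imm_succ {A : biHA} (y z : pt A) : Prop :=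
  plt y z /\ ~ exists u, plt y u /\ plt u z.

Record finposet := FinPoset {
  fcar :> Type;
  fle : fcar -> fcar -> Prop }.

Inductive F0t := F0a | F0b | F0c | F0d | F0e.
Definition F0le (u v : F0t) : Prop :=
  match u, v with
  | F0a, F0a | F0b, F0b | F0c, F0c | F0d, F0d | F0e, F0e => True
  | F0b, F0a | F0d, F0b | F0d, F0a | F0c, F0a | F0e, F0c | F0e, F0a => True
  | _, _ => False
  end.
Definition F0 := FinPoset F0t F0le.

Inductive F1t := F1a | F1b | F1c.
Definition F1le (u v : F1t) : Prop :=
  match u, v with
  | F1a, F1a | F1b, F1b | F1c, F1c => True
  | F1b, F1a | F1c, F1b | F1c, F1a => True
  | _, _ => False
  end.
Definition F1 := FinPoset F1t F1le.

Inductive F2t := F2a | F2b | F2c | F2d | F2a'.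
Definition F2le (u v : F2t) : Prop :=
  match u, v with
  | F2a, F2a | F2b, F2b | F2c, F2c | F2d, F2d | F2a', F2a' => True
  | F2b, F2a | F2c, F2a | F2d, F2a | F2c, F2b | F2d, F2b | F2d, F2c => True
  | F2a', F2a => True
  | _, _ => False
  end.
Definition F2 := FinPoset F2t F2le.

Inductive F3t := F3top | F3p1 | F3p2 | F3p3.
Definition F3le (u v : F3t) : Prop :=
  match u, v with
  | F3top, F3top | F3p1, F3p1 | F3p2, F3p2 | F3p3, F3p3 => True
  | F3p1, F3top | F3p2, F3top | F3p3, F3top => True
  | _, _ => False
  end.
Definition F3 := FinPoset F3t F3le.

Definition order_embeds (Y : finposet) (A : biHA) : Prop :=
  exists f : Y -> pt A, forall u v, fle Y u v <-> ple (f u) (f v).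

Definition cont_surj_bipmorphism (A : biHA) (Y : finposet) : Prop :=
  exists f : pt A -> Y,
    (forall S : Y -> Prop, popen (fun x => S (f x))) /\
    (forall v : Y, exists x, f x = v) /\
    (forall x y, ple x y -> fle Y (f x) (f y)) /\
    (forall x v, fle Y (f x) v -> exists x', ple x x' /\ f x' = v) /\
    (forall x v, fle Y v (f x) -> exists x', ple x' x /\ f x' = v).

Definition validates_biLC (A : biHA) : Prop :=
  forall a b : A, bjoin (bimp a b) (bimp b a) = btop.

Definition validates_LFC (A : biHA) : Prop :=
  validates_biLC A /\
  ~ order_embeds F0 A /\                 (* A |= beta(F0) *)
  ~ cont_surj_bipmorphism A F1 /\       (* A |= J(F1) *)
  ~ cont_surj_bipmorphism A F2 /\       (* A |= J(F2) *)
  ~ cont_surj_bipmorphism A F3.         (* A |= J(F3) *)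

Definition interval_gt {A : biHA} (y x : pt A) (k : nat) : Prop :=
  exists l : list (pt A), k < length l /\
    (forall u, In u l -> ple y u /\ ple u x) /\
    ForallOrdPairs (fun u v => ~ peq u v) l.

(* By bi-LC, the points above any given point form a chain.  Suppose every minimal
   point below x lay below y.  Then every point below x is comparable with y,
   and for points u <= v of [y, x] the elements a with "a in p <-> a in v for all
   p in [u, v]" form a subalgebra: an implication failing at p is refuted at a
   point above p, which lies in the chain above u, and a co-implication holding
   at v is realised at a point below v, which is either below u or in that
   chain.  Hence two points of [y, x] agreeing on the n generators coincide, so
   [y, x] has at most 2^n points.  The minimal point z obtained this way gives
   y', the immediate successor of z.  Prime filters are supplied by the prime
   filter theorem, proved by enumeration since a finitely generated algebra is
   countable. *)

From Stdlib Require Import List Arith Classical ClassicalEpsilon Lia.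
Import ListNotations.

Local Notation "a ∈ x" := (proj1_sig x a) (at level 70, no associativity).

Section Lattice.
Context {A : biHA}.
Implicit Types a b c d e : A.

Lemma meet_idem a : bmeet a a = a.
Proof. pose proof (meetKjoin _ a (bmeet a a)) as H. now rewrite joinKmeet in H. Qed.

Lemma ble_refl a : ble a a.
Proof. apply meet_idem. Qed.

Lemma ble_trans a b c : ble a b -> ble b c -> ble a c.
Proof. unfold ble; intros Hab Hbc. now rewrite <- Hab, <- meetA, Hbc. Qed.

Lemma meet_lb1 a b : ble (bmeet a b) a.
Proof. unfold ble. now rewrite (meetC _ (bmeet a b) a), meetA, meet_idem. Qed.

Lemma meet_lb2 a b : ble (bmeet a b) b.
Proof. unfold ble. now rewrite <- meetA, meet_idem. Qed.

Lemma meet_glb a b c : ble c a -> ble c b -> ble c (bmeet a b).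
Proof. unfold ble; intros Ha Hb. now rewrite meetA, Ha, Hb. Qed.

Lemma ble_joinE a b : ble a b <-> bjoin a b = b.
Proof.
unfold ble; split; intro H.
- now rewrite <- H, joinC, meetC, joinKmeet.
- now rewrite <- H, meetKjoin.
Qed.

Lemma join_ub1 a b : ble a (bjoin a b).
Proof. apply meetKjoin. Qed.

Lemma join_ub2 a b : ble b (bjoin a b).
Proof. rewrite joinC. apply join_ub1. Qed.

Lemma join_lub a b c : ble a c -> ble b c -> ble (bjoin a b) c.
Proof. rewrite !ble_joinE. intros Ha Hb. now rewrite <- joinA, Hb, Ha. Qed.

Lemma ble_top a : ble a btop.
Proof. apply meet_top. Qed.

Lemma ble_bot a : ble bbot a.
Proof. apply ble_joinE. rewrite joinC. apply join_bot. Qed.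

Lemma ble_cut a b e : ble (bmeet a e) b -> ble a (bjoin b e) -> ble a b.
Proof.
intros Hae Hbe. unfold ble in Hbe. rewrite <- Hbe, meet_joinDr.
apply join_lub; [apply meet_lb2 | exact Hae].
Qed.

Lemma ble_imp a b c : ble (bmeet c a) b <-> ble c (bimp a b).
Proof. apply imp_res. Qed.

Lemma ble_coimp a b c : ble (bcoimp a b) c <-> ble a (bjoin b c).
Proof. apply coimp_res. Qed.

End Lattice.

Arguments ble_trans {A a} b {c}.

Ltac lattice :=
  match goal with
  | |- ble (bjoin _ _) _ => apply join_lub; lattice
  | |- ble _ (bmeet _ _) => apply meet_glb; lattice
  | |- _ => first
      [ assumption | apply ble_refl | apply ble_top | apply ble_bot
      | apply (ble_trans _ (meet_lb1 _ _)); lattice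
      | apply (ble_trans _ (meet_lb2 _ _)); lattice
      | apply (fun H => ble_trans _ H (join_ub1 _ _)); lattice
      | apply (fun H => ble_trans _ H (join_ub2 _ _)); lattice ]
  end.

Ltac lattice_via H :=
  match type of H with
  | ble ?p _ => apply (ble_trans p); [lattice | apply (ble_trans _ H); lattice]
  end.

Section Points.
Context {A : biHA}.
Implicit Types (x : pt A) (a b : A).

Lemma pt_top x : btop ∈ x.
Proof. apply (proj2_sig x). Qed.

Lemma pt_nbot x : ~ bbot ∈ x.
Proof. apply (proj2_sig x). Qed.

Lemma pt_up x a b : a ∈ x -> ble a b -> b ∈ x.
Proof. apply (proj2_sig x). Qed.

Lemma pt_meet x a b : a ∈ x -> b ∈ x -> bmeet a b ∈ x.
Proof. apply (proj2_sig x). Qed.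

Lemma pt_join x a b : bjoin a b ∈ x -> a ∈ x \/ b ∈ x.
Proof. apply (proj2_sig x). Qed.

Lemma pt_mp x a b : a ∈ x -> bimp a b ∈ x -> b ∈ x.
Proof.
intros Ha Hab. apply (pt_up x (bmeet (bimp a b) a)); [now apply pt_meet|].
apply ble_imp, ble_refl.
Qed.

Lemma pt_coimp x a b : a ∈ x -> ~ b ∈ x -> bcoimp a b ∈ x.
Proof.
intros Ha Hb. destruct (pt_join x b (bcoimp a b)) as [H|H]; [|easy|easy].
apply (pt_up x a); [exact Ha|]. apply ble_coimp, ble_refl.
Qed.

Lemma ple_refl x : ple x x.
Proof. now intros a. Qed.

Lemma ple_trans x y z : ple x y -> ple y z -> ple x z.
Proof. intros Hxy Hyz a Ha. now apply Hyz, Hxy. Qed.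

End Points.

Definition enumerable (A : biHA) : Prop :=
  exists L : nat -> list A, forall a, exists k, In a (L k).

Section PrimeFilterTheorem.
Variable A : biHA.
Variable L : nat -> list A.
Hypothesis L_enum : forall a, exists k, In a (L k).
Variables F I : A -> Prop.
Hypothesis F_top : F btop.
Hypothesis F_meet : forall a b, F a -> F b -> F (bmeet a b).
Hypothesis I_bot : I bbot.
Hypothesis I_join : forall a b, I a -> I b -> I (bjoin a b).
Hypothesis F_I_apart : forall c d, F c -> I d -> ~ ble c d.

(* A pair (f, i) is separated when the filter generated by F and f misses the
   ideal generated by I and i.  Instead of Zorn's lemma, the prime filter is
   built by deciding the elements one at a time while keeping the pair separated. *)
Definition separated (fi : A * A) : Prop :=
  forall c d, F c -> I d -> ~ ble (bmeet c (fst fi)) (bjoin (snd fi) d).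

Definition pair_le (fi fi' : A * A) : Prop :=
  ble (fst fi') (fst fi) /\ ble (snd fi) (snd fi').

Lemma pair_le_refl fi : pair_le fi fi.
Proof. split; apply ble_refl. Qed.

Lemma pair_le_trans fi1 fi2 fi3 : pair_le fi1 fi2 -> pair_le fi2 fi3 -> pair_le fi1 fi3.
Proof. intros [] []; split; eapply ble_trans; eauto. Qed.

Lemma separated_not_le f i : separated (f, i) -> ~ ble f i.
Proof. intros Hs Hfi. apply (Hs btop bbot F_top I_bot). simpl. lattice. Qed.

Lemma separated_split f i e :
  separated (f, i) -> separated (bmeet f e, i) \/ separated (f, bjoin i e).
Proof.
intros Hs. apply NNPP; intros Hn. apply not_or_and in Hn as [H1 H2].
apply H1; intros c1 d1 Hc1 Hd1 Hle1. apply H2; intros c2 d2 Hc2 Hd2 Hle2.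
apply (Hs (bmeet c1 c2) (bjoin d1 d2) (F_meet _ _ Hc1 Hc2) (I_join _ _ Hd1 Hd2)).
simpl in *. apply (ble_cut _ _ e); [lattice_via Hle1 | lattice_via Hle2].
Qed.

Definition extend (fi : A * A) (e : A) : A * A :=
  if excluded_middle_informative (separated (bmeet (fst fi) e, snd fi))
  then (bmeet (fst fi) e, snd fi) else (fst fi, bjoin (snd fi) e).

Lemma extend_separated fi e : separated fi -> separated (extend fi e).
Proof.
destruct fi as [f i]; unfold extend; simpl; intros Hs.
destruct excluded_middle_informative as [H|H]; [exact H|].
now destruct (separated_split f i e Hs).
Qed.

Lemma extend_pair_le fi e : pair_le fi (extend fi e).
Proof.
unfold extend; destruct excluded_middle_informative; split; simpl; lattice.
Qed.

Lemma extend_decides fi e : ble (fst (extend fi e)) e \/ ble e (snd (extend fi e)).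
Proof. unfold extend; destruct excluded_middle_informative; simpl; [left|right]; lattice. Qed.

Definition extend_list (fi : A * A) (l : list A) : A * A := fold_left extend l fi.

Lemma extend_list_separated l : forall fi, separated fi -> separated (extend_list fi l).
Proof. induction l; simpl; auto using extend_separated. Qed.

Lemma extend_list_pair_le l : forall fi, pair_le fi (extend_list fi l).
Proof.
induction l; simpl; intros fi; [apply pair_le_refl|].
eapply pair_le_trans; [apply extend_pair_le | apply IHl].
Qed.

Lemma extend_list_decides l : forall fi e, In e l ->
  ble (fst (extend_list fi l)) e \/ ble e (snd (extend_list fi l)).
Proof.
induction l as [|e' l IHl]; simpl; intros fi e He; [easy|].
destruct He as [->|He]; [|now apply IHl].
destruct (extend_list_pair_le l (extend fi e)) as [Hf Hi].
destruct (extend_decides fi e); [left|right]; eapply ble_trans; eauto.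
Qed.

Fixpoint stage (k : nat) : A * A :=
  match k with
  | 0 => (btop, bbot)
  | S k => extend_list (stage k) (L k)
  end.

Lemma stage_separated k : separated (stage k).
Proof.
induction k; simpl; [|now apply extend_list_separated].
intros c d Hc Hd Hle. apply (F_I_apart c d Hc Hd). simpl in Hle. lattice_via Hle.
Qed.

Lemma stage_mono k k' : k <= k' -> pair_le (stage k) (stage k').
Proof.
induction 1; [apply pair_le_refl|].
eapply pair_le_trans; [eassumption | apply extend_list_pair_le].
Qed.

Lemma stage_decides e : exists k, ble (fst (stage k)) e \/ ble e (snd (stage k)).
Proof. destruct (L_enum e) as [k Hk]. exists (S k). now apply extend_list_decides. Qed.

Definition limit_filter (a : A) : Prop := exists k, ble (fst (stage k)) a.

Lemma limit_filter_prime : prime_filter A limit_filter.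
Proof.
split; [|split; [|split; [|split]]].
- exists 0. apply ble_top.
- intros [k Hk]. apply (stage_separated k btop bbot F_top I_bot). lattice.
- intros a b [k Hk] Hab. exists k. exact (ble_trans _ Hk Hab).
- intros a b [k1 H1] [k2 H2]. exists (max k1 k2).
  destruct (stage_mono k1 (max k1 k2)) as [R1 _]; [lia|].
  destruct (stage_mono k2 (max k1 k2)) as [R2 _]; [lia|].
  apply meet_glb; [exact (ble_trans _ R1 H1) | exact (ble_trans _ R2 H2)].
- intros a b [k Hk]. apply NNPP; intros Hn. apply not_or_and in Hn as [Ha Hb].
  destruct (stage_decides a) as [ka [Da|Da]]; [now apply Ha; exists ka|].
  destruct (stage_decides b) as [kb [Db|Db]]; [now apply Hb; exists kb|].
  set (K := max k (max ka kb)).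
  destruct (stage_mono k K) as [R _]; [lia|].
  destruct (stage_mono ka K) as [_ Ra]; [lia|].
  destruct (stage_mono kb K) as [_ Rb]; [lia|].
  apply (separated_not_le (fst (stage K)) (snd (stage K))); [apply stage_separated|].
  apply (ble_trans _ R), (ble_trans _ Hk), join_lub; eapply ble_trans; eauto.
Qed.

Theorem prime_filter_separation :
  exists q : pt A, (forall c, F c -> c ∈ q) /\ (forall d, I d -> ~ d ∈ q).
Proof.
exists (exist _ limit_filter limit_filter_prime); simpl; split.
- intros c Hc. destruct (stage_decides c) as [k [H|H]]; [now exists k|].
  exfalso. apply (stage_separated k c bbot Hc I_bot). lattice.
- intros d Hd [k Hk]. apply (stage_separated k btop d F_top Hd). lattice.
Qed.

End PrimeFilterTheorem.

Section PointExtension.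
Variable A : biHA.
Hypothesis A_enum : enumerable A.

Lemma imp_refuted_above (x : pt A) a b :
  ~ bimp a b ∈ x -> exists q : pt A, ple x q /\ a ∈ q /\ ~ b ∈ q.
Proof.
intros Hab. destruct A_enum as [L HL].
destruct (prime_filter_separation A L HL
  (fun z => exists c, c ∈ x /\ ble (bmeet c a) z) (fun z => ble z b))
  as (q & HF & HI).
- exists btop. split; [apply pt_top | apply meet_lb1].
- intros z1 z2 [c1 [Hc1 H1]] [c2 [Hc2 H2]]. exists (bmeet c1 c2).
  split; [now apply pt_meet|].
  apply meet_glb; [lattice_via H1 | lattice_via H2].
- apply ble_bot.
- intros z1 z2. apply join_lub.
- intros z d [c [Hc Hca]] Hdb Hzd. apply Hab, (pt_up x c); [exact Hc|].
  apply ble_imp. exact (ble_trans _ Hca (ble_trans _ Hzd Hdb)).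
- exists q. split; [|split].
  + intros c Hc. apply HF. exists c. split; [exact Hc | apply meet_lb1].
  + apply HF. exists btop. split; [apply pt_top | apply meet_lb2].
  + apply HI, ble_refl.
Qed.

Lemma coimp_realized_below (x : pt A) a b :
  bcoimp a b ∈ x -> exists q : pt A, ple q x /\ a ∈ q /\ ~ b ∈ q.
Proof.
intros Hab. destruct A_enum as [L HL].
destruct (prime_filter_separation A L HL
  (fun z => ble a z) (fun z => exists d, ~ d ∈ x /\ ble z (bjoin b d)))
  as (q & HF & HI).
- apply ble_top.
- intros z1 z2. apply meet_glb.
- exists bbot. split; [apply pt_nbot | apply ble_bot].
- intros z1 z2 [d1 [Hd1 H1]] [d2 [Hd2 H2]]. exists (bjoin d1 d2). split.
  + intros Hd. now destruct (pt_join x d1 d2 Hd).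
  + apply join_lub; [lattice_via H1 | lattice_via H2].
- intros z z' Haz [d [Hd Hz']] Hzz'. apply Hd, (pt_up x (bcoimp a b)); [exact Hab|].
  apply ble_coimp. exact (ble_trans _ Haz (ble_trans _ Hzz' Hz')).
- exists q. split; [|split].
  + intros z Hz. apply NNPP. intros Hnz. apply (HI z); [|exact Hz].
    exists z. split; [exact Hnz | apply join_ub2].
  + apply HF, ble_refl.
  + apply HI. exists bbot. split; [apply pt_nbot | apply join_ub1].
Qed.

End PointExtension.

Section Enumeration.
Context {A : biHA}.
Variable g : nat -> A.
Variable n : nat.

Fixpoint term_values (k : nat) : list A :=
  match k with
  | 0 => bbot :: btop :: map g (seq 0 n)
  | S k => term_values k ++
      flat_map (fun a => flat_map (fun b =>
        [bjoin a b; bmeet a b; bimp a b; bcoimp a b]) (term_values k)) (term_values k)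
  end.

Lemma term_values_mono k k' a : k <= k' -> In a (term_values k) -> In a (term_values k').
Proof. induction 1; simpl; auto using in_or_app. Qed.

Lemma term_values_closed : closed_sub A (fun a => exists k, In a (term_values k)).
Proof.
split; [now exists 0; left | split; [now exists 0; right; left|]].
intros a b [k1 H1] [k2 H2].
assert (Ha : In a (term_values (max k1 k2))) by (apply (term_values_mono k1); [lia | exact H1]).
assert (Hb : In b (term_values (max k1 k2))) by (apply (term_values_mono k2); [lia | exact H2]).
assert (Hop : forall c, In c [bjoin a b; bmeet a b; bimp a b; bcoimp a b] ->
  exists k, In c (term_values k)).
{ intros c Hc. exists (S (max k1 k2)). simpl. apply in_or_app. right.
  apply in_flat_map. exists a. split; [exact Ha|].
  apply in_flat_map. exists b. split; [exact Hb | exact Hc]. }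
repeat split; apply Hop; simpl; auto.
Qed.

Lemma term_values_generators i : i < n -> exists k, In (g i) (term_values k).
Proof. intros Hi. exists 0. right; right. apply in_map, in_seq. lia. Qed.

End Enumeration.

Lemma n_generated_enumerable (A : biHA) n : n_generated A n -> enumerable A.
Proof.
intros [g Hg]. exists (term_values g n).
exact (Hg _ (term_values_closed g n) (term_values_generators g n)).
Qed.

Lemma biLC_ple_total_above {A : biHA} (m p q : pt A) :
  validates_biLC A -> ple m p -> ple m q -> ple p q \/ ple q p.
Proof.
intros HLC Hmp Hmq. destruct (classic (ple p q)) as [|Hpq]; [now left|]. right.
intros b Hb. apply NNPP; intros Hpb. apply Hpq. intros a Ha. apply NNPP; intros Hqa.
assert (Htop := pt_top m). rewrite <- (HLC a b) in Htop.
destruct (pt_join m _ _ Htop) as [Hab|Hba].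
- exact (Hpb (pt_mp p a b Ha (Hmp _ Hab))).
- exact (Hqa (pt_mp q b a Hb (Hmq _ Hba))).
Qed.

Lemma ForallOrdPairs_filter (X : Type) (R : X -> X -> Prop) (f : X -> bool) l :
  ForallOrdPairs R l -> ForallOrdPairs R (filter f l).
Proof.
induction 1 as [|a l Ha Hl IHl]; simpl; [constructor|].
destruct (f a); [|exact IHl]. constructor; [|exact IHl].
apply Forall_forall. intros z Hz. apply filter_In in Hz.
exact (proj1 (Forall_forall _ _) Ha z (proj1 Hz)).
Qed.

Lemma pigeonhole_pow2 (X : Type) (R : X -> X -> Prop) (Q : X -> nat -> Prop) n :
  forall l, ForallOrdPairs R l -> 2 ^ n < length l ->
  exists u v, In u l /\ In v l /\ R u v /\ forall i, i < n -> (Q u i <-> Q v i).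
Proof.
induction n as [|n IHn]; intros l Hl Hlen.
- destruct Hl as [|u l Hu Hl]; simpl in Hlen; [lia|].
  destruct l as [|v l]; simpl in Hlen; [lia|].
  exists u, v. split; [now left | split; [now right; left | split]].
  + exact (Forall_inv Hu).
  + intros i Hi. lia.
- set (holds u := if excluded_middle_informative (Q u n) then true else false).
  assert (Half : exists l' (P : Prop), incl l' l /\ ForallOrdPairs R l' /\
            2 ^ n < length l' /\ forall u, In u l' -> (Q u n <-> P)).
  { pose proof (filter_length holds l) as Hsplit. rewrite Nat.pow_succ_r' in Hlen.
    destruct (Nat.lt_ge_cases (2 ^ n) (length (filter holds l))).
    - exists (filter holds l), True. split; [apply incl_filter|].
      split; [now apply ForallOrdPairs_filter | split; [assumption|]].
      intros u Hu. apply filter_In in Hu as [_ Hu]. unfold holds in Hu.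
      destruct excluded_middle_informative; easy.
    - exists (filter (fun u => negb (holds u)) l), False. split; [apply incl_filter|].
      split; [now apply ForallOrdPairs_filter | split; [lia|]].
      intros u Hu. apply filter_In in Hu as [_ Hu]. unfold holds in Hu.
      destruct excluded_middle_informative; easy. }
  destruct Half as (l' & P & Hincl & Hl' & Hlen' & HP).
  destruct (IHn l' Hl' Hlen') as (u & v & Hu & Hv & Ruv & Hagree).
  exists u, v. split; [now apply Hincl | split; [now apply Hincl | split; [exact Ruv|]]].
  intros i Hi. destruct (Nat.eq_dec i n) as [->|Hin].
  + rewrite (HP u Hu), (HP v Hv). reflexivity.
  + apply Hagree. lia.
Qed.

Section Segment.
Context {A : biHA}.
Hypothesis A_enum : enumerable A.
Variables u v : pt A.
Hypothesis above_u_total : forall p q, ple u p -> ple u q -> ple p q \/ ple q p.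
Hypothesis below_v_comparable : forall q, ple q v -> ple q u \/ ple u q.

Definition segment_stable (a : A) : Prop :=
  forall p, ple u p -> ple p v -> (a ∈ p <-> a ∈ v).

Lemma segment_stable_join a b :
  segment_stable a -> segment_stable b -> segment_stable (bjoin a b).
Proof.
intros Sa Sb p Hup Hpv. split; [apply Hpv|]. intros Hv.
destruct (pt_join v a b Hv) as [Ha|Hb].
- apply (pt_up p a); [now apply (Sa p) | apply join_ub1].
- apply (pt_up p b); [now apply (Sb p) | apply join_ub2].
Qed.

Lemma segment_stable_meet a b :
  segment_stable a -> segment_stable b -> segment_stable (bmeet a b).
Proof.
intros Sa Sb p Hup Hpv. split; [apply Hpv|]. intros Hv.
apply pt_meet; [apply (Sa p Hup Hpv), (pt_up v _ a Hv), meet_lb1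
               |apply (Sb p Hup Hpv), (pt_up v _ b Hv), meet_lb2].
Qed.

Lemma segment_stable_imp a b :
  segment_stable a -> segment_stable b -> segment_stable (bimp a b).
Proof.
intros Sa Sb p Hup Hpv. split; [apply Hpv|]. intros Hv. apply NNPP; intros Hp.
destruct (imp_refuted_above A A_enum p a b Hp) as (q & Hpq & Hqa & Hqb).
assert (Huq : ple u q) by exact (ple_trans u p q Hup Hpq).
destruct (above_u_total v q (ple_trans u p v Hup Hpv) Huq) as [Hvq|Hqv].
- exact (Hqb (pt_mp q a b Hqa (Hvq _ Hv))).
- apply Hqb, (Sb q Huq Hqv), (pt_mp v a b); [apply (Sa q Huq Hqv), Hqa | exact Hv].
Qed.

Lemma segment_stable_coimp a b :
  segment_stable a -> segment_stable b -> segment_stable (bcoimp a b).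
Proof.
intros Sa Sb p Hup Hpv. split; [apply Hpv|]. intros Hv.
destruct (coimp_realized_below A A_enum v a b Hv) as (q & Hqv & Hqa & Hqb).
assert (Hq : bcoimp a b ∈ q) by now apply pt_coimp.
destruct (below_v_comparable q Hqv) as [Hqu|Huq]; [exact (Hup _ (Hqu _ Hq))|].
destruct (above_u_total p q Hup Huq) as [Hpq|Hqp]; [|exact (Hqp _ Hq)].
apply pt_coimp.
- apply (Sa p Hup Hpv), (Sa q Huq Hqv), Hqa.
- intros Hpb. exact (Hqb (Hpq _ Hpb)).
Qed.

Lemma segment_stable_closed : closed_sub A segment_stable.
Proof.
split; [|split].
- intros p _ _. split; intros H; exfalso; eapply pt_nbot; eassumption.
- intros p _ _. split; intros _; apply pt_top.
- intros a b Sa Sb. split; [|split; [|split]].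
  + now apply segment_stable_join.
  + now apply segment_stable_meet.
  + now apply segment_stable_imp.
  + now apply segment_stable_coimp.
Qed.

Lemma segment_collapse (g : nat -> A) n :
  (forall S, closed_sub A S -> (forall i, i < n -> S (g i)) -> forall a, S a) ->
  ple u v -> (forall i, i < n -> (g i ∈ u <-> g i ∈ v)) -> ple v u.
Proof.
intros Hg Huv Hagree a Ha.
apply (Hg _ segment_stable_closed) with (p := u); [|apply ple_refl | exact Huv | exact Ha].
intros i Hi p Hup Hpv. split; [apply Hpv|]. intros Hv. now apply Hup, Hagree.
Qed.

End Segment.

Lemma interval_le_pow2 {A : biHA} n (y x : pt A) :
  validates_biLC A -> n_generated A n ->
  (forall q, ple q x -> ple q y \/ ple y q) -> ~ interval_gt y x (2 ^ n).
Proof.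
intros HLC Hgen Hcmp (l & Hlen & Hl & Hdistinct).
pose proof (n_generated_enumerable A n Hgen) as Henum. destruct Hgen as [g Hg].
assert (Hcollapse : forall u v, ple y u -> ple u v -> ple v x ->
          (forall i, i < n -> (g i ∈ u <-> g i ∈ v)) -> ple v u).
{ intros u v Hyu Huv Hvx. apply (segment_collapse Henum u v); [| |exact Hg|exact Huv].
  - intros p q. now apply biLC_ple_total_above.
  - intros q Hqv. destruct (Hcmp q (ple_trans q v x Hqv Hvx)) as [Hqy|Hyq].
    + left. exact (ple_trans q y u Hqy Hyu).
    + now apply (biLC_ple_total_above y). }
destruct (pigeonhole_pow2 _ _ (fun u i => g i ∈ u) n l Hdistinct Hlen)
  as (u & v & Hu & Hv & Huv & Hagree).
destruct (Hl u Hu) as [Hyu Hux], (Hl v Hv) as [Hyv Hvx].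
apply Huv. destruct (biLC_ple_total_above y u v HLC Hyu Hyv) as [Hle|Hle].
- split; [exact Hle | now apply Hcollapse].
- split; [|exact Hle]. apply Hcollapse; [easy..|]. intros i Hi. symmetry. now apply Hagree.
Qed.

Lemma exists_minimal_below_not_below {A : biHA} n (m y x : pt A) :
  validates_biLC A -> n_generated A n -> (forall z, plt m z \/ minimal z) ->
  ple m y -> interval_gt y x (2 ^ n) ->
  exists z, minimal z /\ ple z x /\ ~ ple z y.
Proof.
intros HLC Hgen Hdich Hmy Hint. apply NNPP; intros Hnone.
apply (interval_le_pow2 n y x HLC Hgen); [|exact Hint].
intros q Hqx. destruct (Hdich q) as [[Hmq _]|Hq].
- now apply (biLC_ple_total_above m).
- left. apply NNPP; intros Hqy. apply Hnone. now exists q.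
Qed.

Lemma imm_succ_in_interval {A : biHA} (m y x z s : pt A) :
  validates_biLC A -> ple m y -> ple y x -> minimal z -> ple z x -> ~ ple z y ->
  imm_succ z s -> ple m s -> plt y s /\ ple s x.
Proof.
intros HLC Hmy Hyx Hz Hzx Hzy [[Hzs _] Himm] Hms.
assert (Hsy : ~ ple s y) by (intros Hsy; exact (Hzy (ple_trans z s y Hzs Hsy))).
destruct (biLC_ple_total_above m y s HLC Hmy Hms) as [Hys|]; [|easy].
split; [now split|].
destruct (classic (ple s x)) as [Hsx|Hsx]; [exact Hsx|exfalso].
destruct (biLC_ple_total_above m s x HLC Hms (ple_trans m y x Hmy Hyx)) as [|Hxs]; [easy|].
apply Himm. exists x. split; split; [exact Hzx | | exact Hxs | exact Hsx].
intros Hxz. apply Hzy, Hz, (ple_trans y x z Hyx Hxz).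
Qed.

Theorem lemma3p20 (n : nat) (A : biHA) (m y x : pt A) :
  0 < n ->
  infinite_alg A ->
  n_generated A n ->
  subdirectly_irreducible A ->
  validates_LFC A ->
  minimal m ->
  (forall z : pt A, (plt m z \/ minimal z) /\ ~ (plt m z /\ minimal z)) ->
  (forall z : pt A, minimal z -> ~ peq z m ->
     exists s, imm_succ z s /\ plt m s /\ forall s', imm_succ z s' -> peq s' s) ->
  ple y x -> ple m y ->
  interval_gt y x (2 ^ n) ->
  (exists y' : pt A, plt y y' /\ ple y' x /\
     exists w : pt A, imm_succ w y' /\ ~ plt m w) /\
  (exists z : pt A, minimal z /\ ple z x /\ ~ ple z y).
Proof.
intros _ _ Hgen _ [HLC _] _ Hdich Hsucc Hyx Hmy Hint.
destruct (exists_minimal_below_not_below n m y x HLC Hgen (fun z => proj1 (Hdich z)) Hmy Hint)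
  as (z & Hz & Hzx & Hzy).
assert (Hzm : ~ peq z m) by (intros [Hzm _]; exact (Hzy (ple_trans z m y Hzm Hmy))).
destruct (Hsucc z Hz Hzm) as (s & Hzs & [Hms _] & _).
destruct (imm_succ_in_interval m y x z s HLC Hmy Hyx Hz Hzx Hzy Hzs Hms) as [Hys Hsx].
split; [|now exists z].
exists s. split; [exact Hys | split; [exact Hsx|]].
exists z. split; [exact Hzs|]. intros Hmz. exact (proj2 (Hdich z) (conj Hmz Hz)).
Qed.
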